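(* Let $b>0$, $d\in\mathbb{N}^*$, and let $(G_n)_{n\ge0}$, $G_n=(V_n,E_n)$, be a $(b,d)$-expander. Let $\gamma\in[0,1[$ and $\varepsilon\in\,]0,1[$. Then there is some $c<1$ such that, for $|V_n|$ large enough, \[ \mu_{n,\gamma}\big(L_n^{(1)}\geq c|V_n|\big)\leq \varepsilon. \]
   Context: For a finite graph $G=(V,E)$, $E(A,B)$ is the set of edges with one endpoint in $A$ and the other in $B$, and the Cheeger constant is $c(G)=\min_{A\subset V,\,0<|A|\le |V|/2} |E(A,A^c)|/|A|$. A $(b,d)$-expander is a sequence of finite graphs $G_n=(V_n,E_n)$ such that for every $n$ the maximal degree of $G_n$ is at most $d$ and $c(G_n)>b$, with $|V_n|\to\infty$. Configurations $x\in\{0,1\}^{E_n}$ are identified with the spanning subgraph of $G_n$ keeping exactly the edges $e$ with $x(e)=1$; $\mu_{n,p}$ is the product measure on $\{0,1\}^{E_n}$ under which each $x(e)$ is independently $1$ with probability $p$ and $0$ otherwise. $L_n^{(1)}(x)$ is the number of vertices of the largest connected component of $x$. *)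

From mathcomp Require Import all_boot all_order all_algebra.
From mathcomp Require Import reals.
Set Implicit Arguments. Unset Strict Implicit. Unset Printing Implicit Defensive.
Import Order.TTheory GRing.Theory Num.Theory.
Local Open Scope ring_scope.

Definition simple_graph (V : finType) (adj : rel V) : Prop :=
  (forall x y, adj x y = adj y x) /\ (forall x, ~~ adj x x).

Definition edges (V : finType) (adj : rel V) : {set {set V}} :=
  [set e : {set V} | [exists x, exists y, adj x y && (e == [set x; y])]].

Definition edge_boundary (V : finType) (adj : rel V) (A : {set V}) : {set {set V}} :=
  [set e in edges adj | [exists x in A, exists y in ~: A, e == [set x; y]]].

Definition max_degree_le (V : finType) (adj : rel V) (d : nat) : Prop :=
  forall v : V, (#|[set w | adj v w]| <= d)%N.

(* c(G) > b, where c(G) = min_{0<|A|<=|V|/2} |E(A,A^c)|/|A|  (unfolded: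
   every admissible A has |E(A,A^c)|/|A| > b). *)
Definition cheeger_gt (R : realType) (V : finType) (adj : rel V) (b : R) : Prop :=
  forall A : {set V}, (0 < #|A|)%N -> (#|A| <= #|V| %/ 2)%N ->
    b < (#|edge_boundary adj A|)%:R / (#|A|)%:R.

Definition expander (R : realType) (V : nat -> finType) (adj : forall n, rel (V n))
    (b : R) (d : nat) : Prop :=
  (forall n, simple_graph (adj n)) /\
  (forall n, max_degree_le (adj n) d) /\
  (forall n, cheeger_gt (adj n) b) /\
  (forall M : nat, exists N : nat, forall n, (N <= n)%N -> (M <= #|V n|)%N).

(* A configuration is identified with its set of open edges w \subset E;
   the spanning subgraph keeps exactly the open edges. *)
Definition open_adj (V : finType) (w : {set {set V}}) : rel V :=
  fun x y => (x != y) && ([set x; y] \in w).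

Definition largest_component (V : finType) (w : {set {set V}}) : nat :=
  \max_(v : V) #|[set u | connect (open_adj w) v u]|.

(* mu_{p}(P) for the product Bernoulli(p) measure on {0,1}^E *)
Definition mu (R : realType) (V : finType) (adj : rel V) (p : R)
    (P : pred {set {set V}}) : R :=
  \sum_(w in powerset (edges adj) | P w)
     p ^+ #|w| * (1 - p) ^+ (#|edges adj| - #|w|).

From mathcomp Require Import all_boot all_order all_algebra.
From mathcomp Require Import reals.
From mathcomp Require Import ring lra zify.
Import Order.TTheory GRing.Theory Num.Theory.

Set Implicit Arguments.
Unset Strict Implicit.
Unset Printing Implicit Defensive.

(* Each vertex is isolated with probability
   at least (1 - p)^d, so the number Z of isolated vertices has mean
   m >= (1 - p)^d |V|.  The isolation events of two distinct non-adjacent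
   vertices involve disjoint edge sets, hence are independent, which gives
   Var Z <= (d + 1) |V|.  A component with at least (1 - (1 - p)^d / 2) |V|
   vertices leaves at most m / 2 vertices isolated, and by Chebyshev's
   inequality this has probability at most 4 (d + 1) / ((1 - p)^(2d) |V|). *)

Section Incidence.
Variables (V : finType) (adj : rel V).
Hypothesis adj_sym : symmetric adj.

Definition incident (v : V) : {set {set V}} := [set e in edges adj | v \in e].

Definition isolated (w : {set {set V}}) (v : V) : bool := [disjoint w & incident v].

Lemma incident_sub_edges v : incident v \subset edges adj.
Proof. by apply/subsetP => e /setIdP []. Qed.

Lemma edge_at_vertex e v :
  e \in edges adj -> v \in e -> exists2 y, adj v y & e = [set v; y].
Proof.
rewrite inE => /existsP [x /existsP [y /andP [axy /eqP ->]]].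
rewrite in_set2 => /orP [] /eqP ->; first by exists y.
by exists x; rewrite 1?setUC // adj_sym.
Qed.

Lemma card_incident_le d v : max_degree_le adj d -> (#|incident v| <= d)%N.
Proof.
move=> deg_le; apply: leq_trans (deg_le v).
apply: leq_trans (leq_imset_card (fun y => [set v; y]) _).
apply/subset_leq_card/subsetP => e /setIdP [eE ve].
by have [y ay ->] := edge_at_vertex eE ve; apply/imsetP; exists y; rewrite ?inE.
Qed.

Lemma incident_disjoint u v :
  u != v -> ~~ adj u v -> [disjoint incident u & incident v].
Proof.
move=> neq_uv nadj_uv; apply/pred0P => e /=; apply/andP => -[/setIdP [eE ue]].
have [y ay ->] := edge_at_vertex eE ue; rewrite inE in_set2 => /andP [_].
by case/orP => /eqP vE; [rewrite vE eqxx in neq_uv | rewrite vE ay in nadj_uv].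
Qed.

Lemma card_closed_nbhd_le d u :
  max_degree_le adj d -> (#|[set v | (u == v) || adj u v]| <= d.+1)%N.
Proof.
move=> deg_le; have -> : [set v | (u == v) || adj u v] = u |: [set v | adj u v].
  by apply/setP => v; rewrite !inE eq_sym.
by rewrite cardsU1 -add1n leq_add ?leq_b1.
Qed.

Lemma isolated_connect (w : {set {set V}}) v y :
  w \subset edges adj -> isolated w v -> connect (open_adj w) v y -> y = v.
Proof.
move=> wE iso_v /connectP [[|z p] /= + ->] //.
rewrite /open_adj => /andP [/andP [_ vz] _].
have : [set v; z] \in incident v by rewrite inE (subsetP wE _ vz) set21.
by rewrite (disjointFr iso_v vz).
Qed.

Lemma largest_component_le (w : {set {set V}}) : w \subset edges adj ->
  (largest_component w <= maxn 1 (#|V| - #|[set v | isolated w v]|))%N.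
Proof.
move=> wE; apply/bigmax_leqP => v _; rewrite leq_max.
have open_sym : symmetric (open_adj w) by move=> x y; rewrite /open_adj eq_sym setUC.
case iso_v: (isolated w v); [apply/orP; left | apply/orP; right].
  rewrite -(cards1 v); apply/subset_leq_card/subsetP => y.
  by rewrite !inE => /(isolated_connect wE iso_v) ->.
rewrite -(cardsC [set v | isolated w v]) addKn.
apply/subset_leq_card/subsetP => y; rewrite !inE => vy; apply/negP => iso_y.
rewrite (sym_connect_sym open_sym) in vy.
by rewrite (isolated_connect wE iso_y vy) iso_y in iso_v.
Qed.

End Incidence.

Local Open Scope ring_scope.

Lemma sum_powerset_binomial (R : comPzSemiRingType) (T : finType) (x y : R) (D : {set T}) :
  \sum_(w in powerset D) x ^+ #|w| * y ^+ (#|D| - #|w|) = (x + y) ^+ #|D|.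
Proof.
pose F i := if i \in D then x else 0.
pose G i := if i \in D then y else 1.
have := @bigA_distr R 0 1 *%R +%R T F G.
have -> : \prod_i (F i + G i) = (x + y) ^+ #|D|.
  rewrite (bigID (mem D)) /= -prodr_const.
  rewrite [X in _ * X]big1 ?mulr1; last by move=> i /negbTE Di; rewrite /F /G Di add0r.
  by apply: eq_bigr => i Di; rewrite /F /G Di.
move=> ->; rewrite [RHS](bigID (mem (powerset D))) /=.
rewrite [X in _ = _ + X]big1 ?addr0; last first.
  move=> J; rewrite powersetE => /subsetPn [i iJ iD].
  by rewrite (bigD1 i) //= iJ /F (negbTE iD) mul0r.
apply: eq_bigr => J; rewrite powersetE => JD; rewrite (bigID (mem J)) /=.
rewrite (eq_bigr (fun _ => x)); last by move=> i iJ; rewrite iJ /F (subsetP JD i iJ).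
rewrite prodr_const; congr (_ * _).
rewrite (eq_bigr G); last by move=> i /negbTE ->.
rewrite -big_mkcondr /= prodr_const -(setIidPr JD) -cardsD; congr (_ ^+ _).
by apply: eq_card => i; rewrite [in RHS]unfold_in !inE; case: (i \in J); case: (i \in D).
Qed.

Section BernoulliProduct.
Variables (R : realFieldType) (T : finType) (E : {set T}) (p : R).

Definition bernoulli_weight (w : {set T}) : R := p ^+ #|w| * (1 - p) ^+ (#|E| - #|w|).

Definition expect (f : {set T} -> R) : R :=
  \sum_(w in powerset E) bernoulli_weight w * f w.

Lemma expect_avoid (F : {set T}) : F \subset E ->
  expect (fun w => ([disjoint w & F] : nat)%:R) = (1 - p) ^+ #|F|.
Proof.
move=> FE; rewrite /expect (bigID (fun w : {set T} => [disjoint w & F])) /=.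
rewrite [X in _ + X]big1 ?addr0; last by move=> w /andP [_ /negbTE ->]; rewrite mulr0.
rewrite (eq_bigl (fun w => w \in powerset (E :\: F))); last first.
  by move=> w; rewrite !powersetE subsetD.
have card_E : #|E| = (#|E :\: F| + #|F|)%N.
  by rewrite cardsD (setIidPr FE) subnK // subset_leq_card.
have binom : \sum_(w in powerset (E :\: F)) p ^+ #|w| * (1 - p) ^+ (#|E :\: F| - #|w|) = 1.
  by rewrite sum_powerset_binomial subrKC expr1n.
rewrite -[RHS]mul1r -[X in _ = X * _]binom mulr_suml.
apply: eq_bigr => w; rewrite powersetE => wEF.
have le_w := subset_leq_card wEF; move: wEF; rewrite subsetD => /andP [_ ->].
by rewrite mulr1 /bernoulli_weight -mulrA -exprD card_E; congr (_ * _ ^+ _); lia.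
Qed.

Lemma expect_cst c : expect (fun _ => c) = c.
Proof.
rewrite /expect -mulr_suml; under eq_bigr do rewrite /bernoulli_weight.
by rewrite sum_powerset_binomial subrKC expr1n mul1r.
Qed.

Lemma eq_expect f g : f =1 g -> expect f = expect g.
Proof. by move=> fg; apply: eq_bigr => w _; rewrite fg. Qed.

Lemma expectD f g : expect (fun w => f w + g w) = expect f + expect g.
Proof. by rewrite /expect -big_split; apply: eq_bigr => w _; rewrite mulrDr. Qed.

Lemma expectB f g : expect (fun w => f w - g w) = expect f - expect g.
Proof. by rewrite /expect -sumrB; apply: eq_bigr => w _; rewrite mulrBr. Qed.

Lemma expectZ c f : expect (fun w => c * f w) = c * expect f.
Proof. by rewrite /expect mulr_sumr; apply: eq_bigr => w _; rewrite mulrCA. Qed.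

Lemma expect_sum (I : finType) (f : I -> {set T} -> R) :
  expect (fun w => \sum_i f i w) = \sum_i expect (f i).
Proof. by rewrite /expect exchange_big; apply: eq_bigr => w _; rewrite mulr_sumr. Qed.

Hypotheses (p_ge0 : 0 <= p) (p_le1 : p <= 1).

Lemma bernoulli_weight_ge0 w : 0 <= bernoulli_weight w.
Proof. by rewrite mulr_ge0 // exprn_ge0 // subr_ge0. Qed.

Lemma markov_inequality (P : pred {set T}) (f : {set T} -> R) (t : R) : 0 < t ->
  (forall w : {set T}, w \subset E -> 0 <= f w) ->
  (forall w : {set T}, w \subset E -> P w -> t <= f w) ->
  \sum_(w in powerset E | P w) bernoulli_weight w <= expect f / t.
Proof.
move=> t_gt0 f_ge0 f_ge_t; rewrite ler_pdivlMr // mulr_suml big_mkcondr /=.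
apply: ler_sum => w; rewrite powersetE => wE; case: ifP => Pw.
  by rewrite ler_wpM2l ?bernoulli_weight_ge0 ?f_ge_t.
by rewrite mulr_ge0 ?bernoulli_weight_ge0 ?f_ge0.
Qed.

End BernoulliProduct.

Section IsolatedVertices.
Variables (R : realFieldType) (V : finType) (adj : rel V) (p : R) (d : nat).
Hypotheses (adj_sym : symmetric adj) (deg_le : max_degree_le adj d).
Hypotheses (p_ge0 : 0 <= p) (p_le1 : p <= 1).

Local Notation expect := (expect (edges adj) p).

Definition isolated_count (w : {set {set V}}) : R := #|[set v | isolated adj w v]|%:R.

Let isolated_ind v (w : {set {set V}}) : R := (isolated adj w v : nat)%:R.

Lemma isolated_countE w : isolated_count w = \sum_v isolated_ind v w.
Proof.
rewrite /isolated_count -sum1_card natr_sum big_mkcond /=.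
by apply: eq_bigr => v _; rewrite inE /isolated_ind; case: isolated.
Qed.

Lemma expect_isolated_count :
  expect isolated_count = \sum_v (1 - p) ^+ #|incident adj v|.
Proof.
rewrite (eq_expect _ _ isolated_countE) expect_sum; apply: eq_bigr => v _.
exact: expect_avoid (incident_sub_edges adj v).
Qed.

Lemma expect_isolated_count_ge : #|V|%:R * (1 - p) ^+ d <= expect isolated_count.
Proof.
rewrite expect_isolated_count mulr_natl -sumr_const; apply: ler_sum => v _.
by rewrite ler_wiXn2l ?subr_ge0 ?lerBlDr ?lerDl ?card_incident_le.
Qed.

Lemma expect_isolated_pair u v :
  expect (fun w => isolated_ind u w * isolated_ind v w) <=
    (1 - p) ^+ #|incident adj u| * (1 - p) ^+ #|incident adj v| + ((u == v) || adj u v)%:R.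
Proof.
have q_ge0 : 0 <= 1 - p by rewrite subr_ge0.
have -> : expect (fun w => isolated_ind u w * isolated_ind v w) =
          (1 - p) ^+ #|incident adj u :|: incident adj v|.
  rewrite -(@expect_avoid _ _ (edges adj)) ?subUset ?incident_sub_edges //.
  apply: eq_expect => w.
  by rewrite /isolated_ind -natrM mulnb /isolated !disjoints_subset setCU subsetI.
have [close_uv | ] := boolP ((u == v) || adj u v).
  by rewrite mulr1n ler_wpDl ?mulr_ge0 ?exprn_ge0 ?exprn_ile1 // lerBlDr lerDl.
rewrite negb_or => /andP [neq_uv nadj_uv]; rewrite mulr0n addr0.
rewrite cardsU (disjoint_setI0 (incident_disjoint adj_sym neq_uv nadj_uv)).
by rewrite cards0 subn0 exprD.
Qed.

Lemma expect_isolated_count_sqr :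
  expect (fun w => isolated_count w ^+ 2) <= expect isolated_count ^+ 2 + (#|V| * d.+1)%:R.
Proof.
have sqr_sum w : isolated_count w ^+ 2 = \sum_u \sum_v isolated_ind u w * isolated_ind v w.
  by rewrite isolated_countE expr2 mulr_suml; apply: eq_bigr => u _; rewrite mulr_sumr.
have mean_sqr : expect isolated_count ^+ 2 =
    \sum_u \sum_v (1 - p) ^+ #|incident adj u| * (1 - p) ^+ #|incident adj v|.
  by rewrite expect_isolated_count expr2 mulr_suml; apply: eq_bigr => u _; rewrite mulr_sumr.
have close_pairs : \sum_u \sum_v ((u == v) || adj u v)%:R <= (#|V| * d.+1)%:R :> R.
  have -> : (#|V| * d.+1)%N = \sum_(u : V) d.+1 by rewrite sum_nat_const.
  rewrite natr_sum; apply: ler_sum => u _; rewrite -natr_sum ler_nat.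
  apply: leq_trans (card_closed_nbhd_le u deg_le).
  rewrite -sum1_card [leqRHS]big_mkcond /=.
  by apply: leq_sum => v _; rewrite inE; case: (_ || _).
rewrite (eq_expect _ _ sqr_sum) expect_sum mean_sqr.
apply: le_trans (lerD (lexx _) close_pairs).
rewrite -big_split; apply: ler_sum => u _; rewrite expect_sum -big_split; apply: ler_sum => v _.
exact: expect_isolated_pair.
Qed.

Lemma variance_isolated_count_le :
  expect (fun w => (isolated_count w - expect isolated_count) ^+ 2) <= (#|V| * d.+1)%:R.
Proof.
set m := expect isolated_count.
have sqrB w : (isolated_count w - m) ^+ 2 =
    isolated_count w ^+ 2 - 2 * m * isolated_count w + m ^+ 2 by ring.
rewrite (eq_expect _ _ sqrB) expectD expectB expectZ expect_cst -/m.
have := expect_isolated_count_sqr; rewrite -/m !expr2; lra.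
Qed.

End IsolatedVertices.

Lemma largest_component_tail (R : realType) (V : finType) (adj : rel V) (d : nat)
    (p eps : R) :
  symmetric adj -> max_degree_le adj d -> 0 <= p -> p < 1 -> 0 < eps -> (2 < #|V|)%N ->
  4 * d.+1%:R / ((1 - p) ^+ d ^+ 2 * eps) < #|V|%:R ->
  mu adj p (fun w => (1 - (1 - p) ^+ d / 2) * #|V|%:R <= (largest_component w)%:R)
    <= eps.
Proof.
move=> adj_sym deg_le p_ge0 p_lt1 eps_gt0 V_gt2 V_large.
set N : R := #|V|%:R; set q := (1 - p) ^+ d.
set Z := @isolated_count R V adj; set m := expect (edges adj) p Z.
have q_gt0 : 0 < q by rewrite exprn_gt0 // subr_gt0.
have q_le1 : q <= 1 by apply: exprn_ile1; lra.
have N_gt2 : 2 < N by rewrite (ltr_nat R 2).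
have m_ge : N * q <= m := expect_isolated_count_ge adj_sym deg_le p_ge0 (ltW p_lt1).
have m_gt0 : 0 < m by apply: lt_le_trans m_ge; rewrite mulr_gt0 // (lt_trans _ N_gt2).
have tail_event (w : {set {set V}}) : w \subset edges adj ->
    (1 - q / 2) * N <= (largest_component w)%:R -> (m / 2) ^+ 2 <= (Z w - m) ^+ 2.
  move=> wE large; have := largest_component_le wE; rewrite leq_max => /orP [].
    by rewrite -(ler_nat R) => L_le1; exfalso; nra.
  rewrite -(ler_nat R) natrB ?max_card // -/N => L_le.
  have Z_le : Z w <= m / 2 by rewrite /Z /isolated_count; nra.
  by rewrite !expr2; nra.
rewrite /mu; apply: le_trans (markov_inequality p_ge0 (ltW p_lt1) _ _ tail_event) _.
- by rewrite exprn_gt0 // divr_gt0.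
- by move=> w _; apply: sqr_ge0.
rewrite ler_pdivrMr ?exprn_gt0 ?divr_gt0 //.
apply: le_trans (variance_isolated_count_le adj_sym deg_le p_ge0 (ltW p_lt1)) _.
have D_lt : 4 * d.+1%:R < N * (q ^+ 2 * eps).
  by rewrite -ltr_pdivrMr // mulr_gt0 // exprn_gt0.
have Nq_ge0 : 0 <= N * q by rewrite mulr_ge0 // ltW // (lt_trans _ N_gt2).
have Nq_sqr : (N * q) ^+ 2 <= m ^+ 2 by rewrite !expr2 ler_pM.
rewrite natrM -/N; nra.
Qed.

Theorem lemma4p5 (R : realType) (V : nat -> finType) (adj : forall n, rel (V n))
    (b : R) (d : nat) (gamma eps : R) :
  0 < b -> (0 < d)%N -> expander adj b d ->
  0 <= gamma -> gamma < 1 -> 0 < eps -> eps < 1 ->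
  exists c : R, c < 1 /\
    exists M : nat, forall n : nat, (M <= #|V n|)%N ->
      mu (adj n) gamma
         (fun w => c * (#|V n|)%:R <= (largest_component w)%:R) <= eps.
Proof.
move=> _ _ [simple [deg_le _]] gamma_ge0 gamma_lt1 eps_gt0 _.
have q_gt0 : 0 < (1 - gamma) ^+ d by rewrite exprn_gt0 // subr_gt0.
exists (1 - (1 - gamma) ^+ d / 2); split; first by rewrite gtrBl divr_gt0.
set K := 4 * d.+1%:R / ((1 - gamma) ^+ d ^+ 2 * eps).
exists (maxn 3 (Num.truncn K).+1) => n; rewrite geq_max => /andP [V_gt2 V_large].
apply: largest_component_tail => //; first by move=> x y; case: (simple n).
by apply: lt_le_trans (truncnS_gt K) _; rewrite ler_nat.
Qed.
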